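(* The sequence $(A;A^*;\{E_i\}_{i=0}^d;\{E^*_i\}_{i=0}^d)$ is a Leonard system if and only if both of the following hold: (i) there exists a decomposition of $V$ which is split with respect to the orderings $E_0,E_1,\ldots,E_d$ and $E^*_0,E^*_1,\ldots,E^*_d$; (ii) there exists a decomposition of $V$ which is split with respect to the orderings $E_d,E_{d-1},\ldots,E_0$ and $E^*_0,E^*_1,\ldots,E^*_d$.
   Context: Let $\mathbb K$ be a field, $d\ge 0$ an integer, and $\mathcal A$ a $\mathbb K$-algebra isomorphic to $\mathrm{Mat}_{d+1}(\mathbb K)$, with identity $I$. An element of $\mathcal A$ is multiplicity-free if it has $d+1$ mutually distinct eigenvalues, all in $\mathbb K$; for such $A$ with eigenvalues $\theta_0,\ldots,\theta_d$, the primitive idempotent associated with $\theta_i$ is $E_i=\prod_{j\ne i}(A-\theta_jI)/(\theta_i-\theta_j)$. Standing setup: $A,A^*$ are multiplicity-free elements of $\mathcal A$ ($A^*$ is just a name, not an adjoint); $E_0,\ldots,E_d$ is an ordering of the primitive idempotents of $A$ and $\theta_i$ is the eigenvalue of $A$ for $E_i$; $E^*_0,\ldots,E^*_d$ is an ordering of the primitive idempotents of $A^*$ and $\theta^*_i$ is the eigenvalue of $A^*$ for $E^*_i$; $V$ is an irreducible left $\mathcal A$-module. A decomposition of $V$ is a sequence $U_0,\ldots,U_d$ of 1-dimensional subspaces with $V=U_0+\cdots+U_d$ (direct sum). Given orderings $F_0,\ldots,F_d$ of the primitive idempotents of $A$ (with corresponding eigenvalues $\eta_i$) and $F^*_0,\ldots,F^*_d$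 of those of $A^*$ (eigenvalues $\eta^*_i$), a decomposition is split with respect to these orderings if $(A-\eta_iI)U_i=U_{i+1}$ for $0\le i\le d-1$, $(A-\eta_dI)U_d=0$, $(A^*-\eta^*_iI)U_i=U_{i-1}$ for $1\le i\le d$, and $(A^*-\eta^*_0I)U_0=0$. The sequence $(A;A^*;\{E_i\};\{E^*_i\})$ is a Leonard system if for all $0\le i,j\le d$: $E^*_iAE^*_j=0$ if $|i-j|>1$, $E^*_iAE^*_j\ne0$ if $|i-j|=1$, $E_iA^*E_j=0$ if $|i-j|>1$, and $E_iA^*E_j\ne0$ if $|i-j|=1$. *)

From HB Require Import structures.
From mathcomp Require Import all_boot all_order all_algebra.
Set Implicit Arguments. Unset Strict Implicit. Unset Printing Implicit Defensive.
Import GRing.Theory.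
Local Open Scope ring_scope.

(* The algebra is 'M[K]_(d.+1), V is the column-vector space 'cV[K]_(d.+1),
   acted on by left multiplication. *)

Definition mult_free (K : fieldType) (n : nat) (A : 'M[K]_n.+1)
  (th : 'I_n.+1 -> K) : Prop :=
  injective th /\ forall i, eigenvalue A (th i).

Definition prim_idem (K : fieldType) (n : nat) (A : 'M[K]_n.+1)
  (th : 'I_n.+1 -> K) (i : 'I_n.+1) : 'M[K]_n.+1 :=
  \prod_(j < n.+1 | j != i) ((th i - th j)^-1 *: (A - (th j)%:M)).

Definition actm (K : fieldType) (n : nat) (M : 'M[K]_n)
  : 'Hom('cV[K]_n, 'cV[K]_n) := linfun (mulmx M).

Definition decomposition (K : fieldType) (n : nat)
  (U : 'I_n.+1 -> {vspace 'cV[K]_n.+1}) : Prop :=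
  (forall i, \dim (U i) = 1%N) /\
  directv (\sum_i U i)%VS /\ (\sum_i U i)%VS = fullv.

(* Split w.r.t. orderings of idempotents whose eigenvalues are eta, etas. *)
Definition split_dec (K : fieldType) (n : nat) (A As : 'M[K]_n.+1)
  (eta etas : 'I_n.+1 -> K) (U : 'I_n.+1 -> {vspace 'cV[K]_n.+1}) : Prop :=
  decomposition U /\
  (forall i : 'I_n.+1, (i < n)%N ->
     (actm (A - (eta i)%:M) @: U i)%VS = U (inord i.+1)) /\
  (actm (A - (eta ord_max)%:M) @: U ord_max)%VS = 0%VS /\
  (forall i : 'I_n.+1, (0 < i)%N ->
     (actm (As - (etas i)%:M) @: U i)%VS = U (inord i.-1)) /\
  (actm (As - (etas ord0)%:M) @: U ord0)%VS = 0%VS.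

Definition leonard_system (K : fieldType) (n : nat) (A As : 'M[K]_n.+1)
  (E Es : 'I_n.+1 -> 'M[K]_n.+1) : Prop :=
  forall i j : 'I_n.+1,
    (((i.+1 < j)%N || (j.+1 < i)%N) -> Es i *m A *m Es j = 0) /\
    (((i.+1 == j) || (j.+1 == i)) -> Es i *m A *m Es j != 0) /\
    (((i.+1 < j)%N || (j.+1 < i)%N) -> E i *m As *m E j = 0) /\
    (((i.+1 == j) || (j.+1 == i)) -> E i *m As *m E j != 0).

From HB Require Import structures.
From mathcomp Require Import all_boot all_order all_algebra.
From mathcomp Require Import zify.
Set Implicit Arguments. Unset Strict Implicit. Unset Printing Implicit Defensive.
Import GRing.Theory.
Local Open Scope ring_scope.

(* Take x <> 0 in E*_0 V and put
   v_k = (A - th_(k-1)) ... (A - th_0) x.  As E*_j A E*_i vanishes for j > i + 1 and not for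
   j = i + 1, the v_k are triangular with nonzero diagonal with respect to the E*_j, hence a
   basis, with (A - th_k) v_k = v_(k+1) and v_(d+1) = 0.  They are also triangular with respect
   to the E_j, and the two triangularities together show that A* - th*_k maps v_k to a nonzero
   multiple of v_(k-1): the lines K v_k form a split decomposition.  Reversing the order of the
   E_i preserves the conditions and gives the second decomposition.

   Conversely, for a split decomposition the flags U_0 + ... + U_k are A*-stable and contain
   E*_k V, and A maps each into the next one but not into itself; this is the lower half of the
   tridiagonal conditions on E*_i A E*_j and, reading the decomposition backwards, the upper half
   of those on E_i A* E_j.  The second decomposition supplies the lower half for E_i A* E_j.
   Finally the tridiagonal action of A* on the eigenrows f_i of A is symmetrised by weights w_i,
   so that A and A* are both self-adjoint for the nondegenerate form sum_i w_i f_i^T f_i; hence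
   E*_i A E*_j = 0 iff E*_j A E*_i = 0, which gives the missing upper half. *)

Lemma mx_eq0_mulcV (K : fieldType) m (Z : 'M[K]_m) :
  (forall y : 'cV_m, Z *m y = 0) -> Z = 0.
Proof.
move=> Z0; apply/matrixP => a b.
by move: (Z0 (delta_mx b 0)); rewrite -colE => /matrixP/(_ a 0); rewrite !mxE.
Qed.

Section PrimIdemPoly.
Variables (K : fieldType) (d : nat).
Local Notation n := d.+1.
Implicit Types (M : 'M[K]_n) (t : 'I_n -> K).

Definition lagrange_poly t (i : 'I_n) : {poly K} :=
  \prod_(j < n | j != i) ((t i - t j)^-1 *: ('X - (t j)%:P)).

Lemma prim_idem_horner M t i : prim_idem M t i = horner_mx M (lagrange_poly t i).
Proof.
rewrite /prim_idem /lagrange_poly rmorph_prod; apply: eq_bigr => j _.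
rewrite -mul_polyC rmorphM rmorphB /= !horner_mx_C horner_mx_X; exact/esym/mul_scalar_mx.
Qed.

Lemma lagrange_poly_eval t i k : injective t ->
  (lagrange_poly t i).[t k] = (i == k)%:R.
Proof.
move=> t_inj; rewrite /lagrange_poly horner_prod; case: eqP => [<-|/eqP ik].
  apply: big1 => j ji; rewrite hornerZ hornerXsubC mulVf // subr_eq0.
  by apply: contra ji => /eqP/t_inj->.
by rewrite (bigD1 k) 1?eq_sym //= hornerZ hornerXsubC subrr mulr0 mul0r.
Qed.

Lemma mul_eigenrow_horner M (v : 'rV[K]_n) a p : v *m M = a *: v ->
  v *m horner_mx M p = p.[a] *: v.
Proof.
move=> vM; elim/poly_ind: p => [|p c IH].
  by rewrite rmorph0 mulmx0 horner0 scale0r.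
rewrite rmorphD rmorphM /= horner_mx_X horner_mx_C mulmxDr mulmxA IH.
by rewrite -scalemxAl vM mul_mx_scalar scalerA hornerMXaddC scalerDl mulrC.
Qed.

Lemma horner_mul_eigencols M (B : 'M[K]_n) a p : M *m B = a *: B ->
  horner_mx M p *m B = p.[a] *: B.
Proof.
move=> MB; elim/poly_ind: p => [|p c IH].
  by rewrite rmorph0 mul0mx horner0 scale0r.
rewrite rmorphD rmorphM /= horner_mx_X horner_mx_C mulmxDl -mulmxA MB.
by rewrite -scalemxAr IH scalerA hornerMXaddC mul_scalar_mx scalerDl mulrC.
Qed.

End PrimIdemPoly.

Section Eigenbasis.
Variables (K : fieldType) (d : nat).
Local Notation n := d.+1.
Variables (M : 'M[K]_n) (t : 'I_n -> K).
Hypothesis mfM : mult_free M t.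
Local Notation E := (prim_idem M t).

Let t_inj : injective t := proj1 mfM.

Lemma eigenrow_exists i : exists v : 'rV[K]_n, (v *m M == t i *: v) && (v != 0).
Proof. by case/eigenvalueP: (proj2 mfM i) => v vM vn0; exists v; rewrite vM eqxx. Qed.

Definition eigenrow i := xchoose (eigenrow_exists i).

Lemma eigenrowP i : eigenrow i *m M = t i *: eigenrow i.
Proof. by case/andP: (xchooseP (eigenrow_exists i)) => /eqP. Qed.

Lemma eigenrow_neq0 i : eigenrow i != 0.
Proof. by case/andP: (xchooseP (eigenrow_exists i)). Qed.

Lemma eigenrow_prim_idem i j : eigenrow j *m E i = (i == j)%:R *: eigenrow j.
Proof. by rewrite prim_idem_horner (mul_eigenrow_horner _ (eigenrowP j)) lagrange_poly_eval. Qed.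

Definition eigenrow_mx := \matrix_(i < n) eigenrow i.

Lemma eigenrow_mx_unit : eigenrow_mx \in unitmx.
Proof.
rewrite unitmxE unitfE; apply/det0P => -[u un0 uV]; case/eqP: un0.
apply/rowP => j; rewrite mxE.
have : u *m eigenrow_mx *m E j = 0 by rewrite uV mul0mx.
rewrite (mulmx_sum_row u) mulmx_suml (bigD1 j) //= big1 => [|k kj].
  rewrite addr0 rowK -scalemxAl eigenrow_prim_idem eqxx scale1r => /eqP.
  by rewrite scaler_eq0 (negbTE (eigenrow_neq0 j)) orbF => /eqP.
by rewrite rowK -scalemxAl eigenrow_prim_idem eq_sym (negbTE kj) scale0r scaler0.
Qed.

Definition dual_eigencol i := col i (invmx eigenrow_mx).

Lemma prim_idem_factor i : E i = dual_eigencol i *m eigenrow i.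
Proof.
have VE : eigenrow_mx *m E i = delta_mx i 0 *m eigenrow i.
  apply/row_matrixP => a; rewrite !row_mul rowK eigenrow_prim_idem.
  have -> : row a (delta_mx i 0 : 'M_(n, 1)) = ((i == a)%:R%:M : 'M[K]_1).
    by apply/rowP => z; rewrite !mxE ord1 eqxx andbT eq_sym.
  by rewrite mul_scalar_mx; case: eqP => [->|]; rewrite ?scale0r.
by rewrite -[E i]mul1mx -(mulVmx eigenrow_mx_unit) -mulmxA VE mulmxA -colE.
Qed.

Lemma sum_prim_idem : \sum_i E i = 1%:M.
Proof.
rewrite -(mulVmx eigenrow_mx_unit); apply/matrixP => a b.
rewrite summxE mxE; apply: eq_bigr => i _.
by rewrite prim_idem_factor !mxE big_ord1 !mxE.
Qed.

Lemma sum_prim_idem_mulmx (v : 'cV[K]_n) : \sum_i E i *m v = v.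
Proof. by rewrite -mulmx_suml sum_prim_idem mul1mx. Qed.

Lemma prim_idem_mulmx i : E i *m M = t i *: E i.
Proof. by rewrite prim_idem_factor -mulmxA eigenrowP scalemxAr. Qed.

Lemma mulmx_prim_idem i : M *m E i = t i *: E i.
Proof.
have -> : M *m E i = E i *m M by rewrite prim_idem_horner; apply: comm_mx_horner.
exact: prim_idem_mulmx.
Qed.

Lemma prim_idem_mul j i : E j *m E i = (j == i)%:R *: E i.
Proof.
by rewrite {1}prim_idem_horner (horner_mul_eigencols _ (mulmx_prim_idem i)) lagrange_poly_eval.
Qed.

Lemma prim_idem_neq0 i : E i != 0.
Proof.
apply: contraNneq (eigenrow_neq0 i) => Ei0.
by have := eigenrow_prim_idem i i; rewrite eqxx scale1r Ei0 mulmx0 => ->.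
Qed.

Lemma prim_idem_shift j c : E j *m (M - c%:M) = (t j - c) *: E j.
Proof. by rewrite mulmxBr prim_idem_mulmx mul_mx_scalar scalerBl. Qed.

Lemma prim_idem_shift_eq0 j c (u : 'cV[K]_n) :
  E j *m ((M - c%:M) *m u) = 0 -> t j != c -> E j *m u = 0.
Proof.
rewrite mulmxA prim_idem_shift -scalemxAl => /eqP; rewrite scaler_eq0 subr_eq0.
by case/orP => [/eqP->|/eqP->//]; rewrite eqxx.
Qed.

(* [E i] has rank one. *)
Lemma mulmx_prim_idem_neq0 i (N : 'M[K]_n) (y : 'cV[K]_n) :
  N *m E i != 0 -> E i *m y != 0 -> N *m (E i *m y) != 0.
Proof.
rewrite !prim_idem_factor -!mulmxA [eigenrow i *m y]mx11_scalar mul_mx_scalar.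
rewrite -scalemxAr !scaler_eq0 !negb_or => NE /andP[-> _] /=.
by apply: contraNneq NE => Nc0; rewrite mulmxA Nc0 mul0mx.
Qed.

Lemma prim_idem_fixed_exists i : exists2 x : 'cV[K]_n, E i *m x = x & x != 0.
Proof.
have [j Ej] : exists j : 'I_n, E i *m (delta_mx j 0 : 'cV[K]_n) != 0.
  apply/existsP; apply: contraR (prim_idem_neq0 i) => /existsPn Ecol.
  apply/eqP/matrixP => a b; have := Ecol b.
  by rewrite negbK -colE => /eqP/matrixP/(_ a 0); rewrite !mxE.
by exists (E i *m delta_mx j 0) => //; rewrite mulmxA prim_idem_mul eqxx scale1r.
Qed.

End Eigenbasis.

Section Lines.
Variables (K : fieldType) (n : nat).
Implicit Types (N : 'M[K]_n) (u v : 'cV[K]_n) (U : {vspace 'cV[K]_n}).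

Lemma actmE N v : actm N v = N *m v.
Proof. exact: lfunE. Qed.

Lemma vline0 : <[0 : 'cV[K]_n]>%VS = 0%VS.
Proof. by apply/eqP; rewrite -dimv_eq0 dim_vline eqxx. Qed.

Lemma vline_eq u v : u != 0 -> u \in <[v]>%VS -> <[u]>%VS = <[v]>%VS.
Proof.
move=> u0 uv; apply/eqP; rewrite eqEdim -memvE uv /= !dim_vline u0.
exact: leq_b1.
Qed.

Lemma vline_pick U : \dim U = 1%N -> U = <[vpick U]>%VS.
Proof.
move=> U1; apply/eqP; rewrite eq_sym eqEdim -memvE memv_pick /= U1 dim_vline.
by rewrite vpick0 -dimv_eq0 U1.
Qed.

Lemma actm_img_mem N (U U' : {vspace 'cV[K]_n}) u :
  (actm N @: U)%VS = U' -> u \in U -> N *m u \in U'.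
Proof. by move=> <- uU; rewrite -actmE; apply: memv_img. Qed.

Lemma actm_img_neq0 N (U U' : {vspace 'cV[K]_n}) : \dim U = 1%N -> \dim U' = 1%N ->
  (actm N @: U)%VS = U' -> exists2 u, u \in U & N *m u != 0.
Proof.
move=> U1 U'1 NU; exists (vpick U); first exact: memv_pick.
move: NU; rewrite {1}(vline_pick U1) limg_line actmE => NU.
by apply/eqP => N0; move: U'1; rewrite -NU N0 vline0 dimv0.
Qed.

End Lines.

Section Reversal.
Variables (K : fieldType) (d : nat).
Local Notation n := d.+1.

Lemma ltnS_rev_ord (i j : 'I_n) : ((rev_ord i).+1 < rev_ord j)%N = (j.+1 < i)%N.
Proof. by rewrite /=; have := ltn_ord i; have := ltn_ord j; lia. Qed.

Lemma eqSS_rev_ord (i j : 'I_n) : ((rev_ord i).+1 == rev_ord j) = (j.+1 == i).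
Proof. by rewrite /=; have := ltn_ord i; have := ltn_ord j; lia. Qed.

Lemma rev_ord0 : rev_ord (ord0 : 'I_n) = ord_max.
Proof. by apply: val_inj; rewrite /= subn1. Qed.

Lemma rev_inord_pred (k : 'I_n) :
  (0 < k)%N -> rev_ord (inord k.-1) = inord (rev_ord k).+1 :> 'I_n.
Proof. by move=> k0; apply: val_inj; rewrite /= !inordK /=; have := ltn_ord k; lia. Qed.

Lemma rev_inord_succ (k : 'I_n) :
  (k < d)%N -> rev_ord (inord k.+1) = inord (rev_ord k).-1 :> 'I_n.
Proof. by move=> kd; apply: val_inj; rewrite /= !inordK /=; lia. Qed.

Lemma prim_idem_rev (M : 'M[K]_n) (t : 'I_n -> K) i :
  prim_idem M (fun k => t (rev_ord k)) i = prim_idem M t (rev_ord i).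
Proof.
rewrite !prim_idem_horner /lagrange_poly (reindex_inj rev_ord_inj) /=.
congr horner_mx; apply: eq_big => [j|j _]; last by rewrite rev_ordK.
by rewrite -[in LHS](rev_ordK i) (inj_eq rev_ord_inj).
Qed.

Lemma mult_free_rev (M : 'M[K]_n) (t : 'I_n -> K) :
  mult_free M t -> mult_free M (fun k => t (rev_ord k)).
Proof. by case=> t_inj t_eig; split => // i j /t_inj; apply: rev_ord_inj. Qed.

Lemma sumv_rev (U : 'I_n -> {vspace 'cV[K]_n}) :
  (\sum_i U (rev_ord i))%VS = (\sum_i U i)%VS.
Proof. by rewrite [RHS](reindex_inj rev_ord_inj). Qed.

Lemma directv_rev (U : 'I_n -> {vspace 'cV[K]_n}) :
  directv (\sum_i U i)%VS -> directv (\sum_i U (rev_ord i))%VS.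
Proof.
move/directv_sum_independent => Uind; apply/directv_sum_independent => u uU u0 i _.
have := Uind (fun j => u (rev_ord j)) _ _ (rev_ord i) isT; rewrite rev_ordK; apply.
  by move=> j _; have := uU (rev_ord j) isT; rewrite rev_ordK.
by rewrite -[RHS]u0 [RHS](reindex_inj rev_ord_inj).
Qed.

End Reversal.

Section Tridiagonal.
Variables (K : fieldType) (d : nat).
Local Notation n := d.+1.
Implicit Types (E : 'I_n -> 'M[K]_n) (Z : 'M[K]_n).

Definition lower_tridiagonal E Z := forall i j : 'I_n,
  ((j.+1 < i)%N -> E i *m Z *m E j = 0) /\ (j.+1 == i -> E i *m Z *m E j != 0).

Definition upper_tridiagonal E Z := forall i j : 'I_n,
  ((i.+1 < j)%N -> E i *m Z *m E j = 0) /\ (i.+1 == j -> E i *m Z *m E j != 0).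

Lemma leonard_systemE (A As : 'M[K]_n) E Es :
  leonard_system A As E Es <->
  [/\ lower_tridiagonal Es A, upper_tridiagonal Es A,
      lower_tridiagonal E As & upper_tridiagonal E As].
Proof.
split=> [LS | [lEs uEs lE uE] i j].
  by split=> i j; have [Es0 [Esne [E0 Ene]]] := LS i j;
    split=> ij; rewrite ?(Es0, Esne, E0, Ene) // ij ?orbT.
have [lEs0 lEsne] := lEs i j; have [uEs0 uEsne] := uEs i j.
have [lE0 lEne] := lE i j; have [uE0 uEne] := uE i j.
by do ![split]; case/orP; auto.
Qed.

Lemma upper_tridiagonal_rev E E' Z : (forall i, E' i = E (rev_ord i)) ->
  upper_tridiagonal E' Z <-> lower_tridiagonal E Z.
Proof.
move=> EE'; split=> H i j.
  by have := H (rev_ord i) (rev_ord j); rewrite ltnS_rev_ord eqSS_rev_ord !EE' !rev_ordK.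
by have := H (rev_ord i) (rev_ord j); rewrite ltnS_rev_ord eqSS_rev_ord -!EE'.
Qed.

Lemma lower_tridiagonal_rev E E' Z : (forall i, E' i = E (rev_ord i)) ->
  lower_tridiagonal E' Z <-> upper_tridiagonal E Z.
Proof.
move=> EE'; split=> H i j.
  by have := H (rev_ord i) (rev_ord j); rewrite ltnS_rev_ord eqSS_rev_ord !EE' !rev_ordK.
by have := H (rev_ord i) (rev_ord j); rewrite ltnS_rev_ord eqSS_rev_ord -!EE'.
Qed.

Lemma upper_of_lower_tridiagonal E Z :
  (forall a b, E a *m Z *m E b = 0 -> E b *m Z *m E a = 0) ->
  lower_tridiagonal E Z -> upper_tridiagonal E Z.
Proof.
move=> Esym low i j; have [low0 lowne] := low j i.
by split=> [/low0/Esym // | /lowne]; apply/contra_neq/Esym.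
Qed.

End Tridiagonal.

Section Flag.
Variables (K : fieldType) (d : nat).
Local Notation n := d.+1.
Variables (X Y : 'M[K]_n) (t s : 'I_n -> K) (U : 'I_n -> {vspace 'cV[K]_n}).
Hypothesis mfX : mult_free X t.
Hypothesis U_direct : directv (\sum_i U i)%VS.
Hypothesis U_full : (\sum_i U i)%VS = fullv.
Hypothesis X_lowers : forall {k : 'I_n} {u}, (0 < k)%N -> u \in U k ->
  (X - (t k)%:M) *m u \in U (inord k.-1).
Hypothesis X_kills0 : forall {u}, u \in U ord0 -> (X - (t ord0)%:M) *m u = 0.
Hypothesis Y_raises : forall {k : 'I_n} {u}, (k < d)%N -> u \in U k ->
  (Y - (s k)%:M) *m u \in U (inord k.+1).
Hypothesis Y_raises_neq0 : forall k : 'I_n, (k < d)%N ->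
  exists2 u, u \in U k & (Y - (s k)%:M) *m u != 0.

Local Notation F := (prim_idem X t).
Let t_inj : injective t := proj1 mfX.

Definition flag (i : nat) := (\sum_(k < n | (k <= i)%N) U k)%VS.

Lemma sub_flag (k : 'I_n) i : (k <= i)%N -> (U k <= flag i)%VS.
Proof. by move=> ki; apply: (sumv_sup k). Qed.

Lemma flag_mono i j : (i <= j)%N -> (flag i <= flag j)%VS.
Proof. by move=> ij; apply/subv_sumP => k ki; apply/sub_flag/(leq_trans ki). Qed.

Lemma prim_idem_U_eq0 (k j : 'I_n) u : u \in U k -> (k < j)%N -> F j *m u = 0.
Proof.
move: {2}(k : nat) (erefl (k : nat)) => m; elim: m k u => [|m IH] k u km uU kj.
  have k0 : k = ord0 by apply: val_inj.
  subst k; apply: (prim_idem_shift_eq0 mfX (c := t ord0)); first by rewrite X_kills0 // mulmx0.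
  by apply: contraTneq kj => /t_inj ->.
apply: (prim_idem_shift_eq0 mfX (c := t k)); last first.
  by apply: contraTneq kj => /t_inj ->; rewrite ltnn.
have m_lt : (m < n)%N by rewrite (leq_trans _ (ltn_ord k)) // km.
apply: (IH (inord m)); first by rewrite inordK.
  by have := X_lowers (_ : 0 < k)%N uU; rewrite km; apply.
by rewrite inordK // (ltn_trans _ kj) // km.
Qed.

Lemma prim_idem_flag_eq0 i u (j : 'I_n) : u \in flag i -> (i < j)%N -> F j *m u = 0.
Proof.
case/memv_sumP => us usU -> ij; rewrite mulmx_sumr big1 // => k ki.
by apply: (prim_idem_U_eq0 (usU k ki)); apply: leq_ltn_trans ij.
Qed.

Lemma flag_X_stable i u : u \in flag i -> X *m u \in flag i.
Proof.
case/memv_sumP => us usU ->; rewrite mulmx_sumr; apply: rpred_sum => k ki.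
have -> : X *m us k = (X - (t k)%:M) *m us k + t k *: us k.
  by rewrite mulmxBl mul_scalar_mx subrK.
apply: rpredD; last exact/rpredZ/(subvP (sub_flag ki))/usU.
have [k0|kpos] := posnP k.
  have -> : k = ord0 by apply: val_inj.
  by rewrite X_kills0 ?rpred0 ?usU.
apply: (subvP (sub_flag _)) (X_lowers kpos (usU k ki)).
by rewrite inordK ?(leq_trans (leq_pred _) ki) // (leq_ltn_trans (leq_pred _)).
Qed.

Lemma flag_horner_stable i p u : u \in flag i -> horner_mx X p *m u \in flag i.
Proof.
elim/poly_ind: p u => [|p c IH] u uW; first by rewrite rmorph0 mul0mx rpred0.
rewrite rmorphD rmorphM /= horner_mx_X horner_mx_C mulmxDl -mulmxA mul_scalar_mx.
by apply: rpredD; [apply/IH/flag_X_stable | apply: rpredZ].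
Qed.

(* Components in [U k] with [k > i] are pushed down by [X - t k] without changing their
   [F i]-image up to a nonzero factor, until they land in the [X]-stable flag [flag i]. *)
Lemma prim_idem_in_flag (i : 'I_n) y : F i *m y \in flag i.
Proof.
have : y \in (\sum_i U i)%VS by rewrite U_full memvf.
case/memv_sumP => us usU ->; rewrite mulmx_sumr; apply: rpred_sum => k _.
move: (us k) (usU k isT) => {usU} u.
move: {2}(k : nat) (erefl (k : nat)) => m; elim: m k u => [|m IH] k u km uU.
  by rewrite prim_idem_horner; apply/flag_horner_stable/(subvP (sub_flag _))/uU; rewrite km.
have [ki|ik] := leqP k i.
  by rewrite prim_idem_horner; apply/flag_horner_stable/(subvP (sub_flag ki)).
have m_lt : (m < n)%N by rewrite (leq_trans _ (ltn_ord k)) // km.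
have -> : F i *m u = (t i - t k)^-1 *: (F i *m ((X - (t k)%:M) *m u)).
  rewrite mulmxA prim_idem_shift // -scalemxAl scalerA mulVf ?scale1r // subr_eq0.
  by apply: contraTneq ik => /t_inj ->; rewrite ltnn.
apply/rpredZ/(IH (inord m)); first by rewrite inordK.
by have := X_lowers (_ : 0 < k)%N uU; rewrite km; apply.
Qed.

Lemma flag_Y_raises i u : (i < d)%N -> u \in flag i -> Y *m u \in flag i.+1.
Proof.
move=> id; case/memv_sumP => us usU ->; rewrite mulmx_sumr; apply: rpred_sum => k ki.
have -> : Y *m us k = (Y - (s k)%:M) *m us k + s k *: us k.
  by rewrite mulmxBl mul_scalar_mx subrK.
apply: rpredD; last exact/rpredZ/(subvP (sub_flag (leq_trans ki (leqnSn _))))/usU.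
apply: (subvP (sub_flag _)) (Y_raises (leq_ltn_trans ki id) (usU k ki)).
by rewrite inordK ?ltnS //; apply: leq_ltn_trans ki id.
Qed.

Lemma prim_idem_sandwich_far (i j : 'I_n) : (j.+1 < i)%N -> F i *m Y *m F j = 0.
Proof.
move=> ji; apply: mx_eq0_mulcV => y; rewrite -!mulmxA.
have jd : (j < d)%N by have := ltn_ord i; lia.
exact: prim_idem_flag_eq0 (flag_Y_raises jd (prim_idem_in_flag j y)) ji.
Qed.

Lemma flag_Y_stable (i j : 'I_n) : j.+1 == i -> F i *m Y *m F j = 0 ->
  forall w, w \in flag j -> Y *m w \in flag j.
Proof.
move=> /eqP ji FYF0 w wW; rewrite -[w]mul1mx -(sum_prim_idem mfX) mulmx_suml mulmx_sumr.
apply: rpred_sum => k _.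
have [kj|jk] := leqP k j; last by rewrite (prim_idem_flag_eq0 wW jk) mulmx0 rpred0.
rewrite -[Y *m _]mul1mx -(sum_prim_idem mfX) mulmx_suml; apply: rpred_sum => l _.
have [lj|jl] := leqP l j; first exact/(subvP (flag_mono lj))/prim_idem_in_flag.
have [kl|lk] := ltnP k.+1 l; first by rewrite !mulmxA prim_idem_sandwich_far // !mul0mx rpred0.
have -> : k = j by apply/val_inj => /=; lia.
have -> : l = i by apply/val_inj => /=; lia.
by rewrite !mulmxA FYF0 !mul0mx rpred0.
Qed.

Lemma prim_idem_sandwich_next (i j : 'I_n) : j.+1 == i -> F i *m Y *m F j != 0.
Proof.
move=> ji; apply/negP => /eqP FYF0.
have jd : (j < d)%N by rewrite -ltnS (eqP ji) ltn_ord.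
have ie : i = inord j.+1 by apply/val_inj => /=; rewrite inordK (eqP ji).
have [u uU Yu] := Y_raises_neq0 jd.
have Yu_flag : (Y - (s j)%:M) *m u \in flag j.
  have uW : u \in flag j by apply: (subvP (sub_flag (leqnn j))).
  rewrite mulmxBl mul_scalar_mx; apply: rpredB; last exact: rpredZ.
  exact: flag_Y_stable ji FYF0 _ uW.
move/directv_sumP: U_direct => /(_ i isT) Ui_cap.
have : (Y - (s j)%:M) *m u \in (U i :&: \sum_(k | true && (k != i)) U k)%VS.
  rewrite memv_cap ie Y_raises //=; apply: subvP Yu_flag; apply/subv_sumP => k kj.
  apply: (sumv_sup k) => //; apply: contraTneq kj => ->.
  by rewrite -ltnNge inordK.
by rewrite Ui_cap memv0 (negbTE Yu).
Qed.

Lemma lower_tridiagonal_flag : lower_tridiagonal F Y.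
Proof. by move=> i j; split; [apply: prim_idem_sandwich_far | apply: prim_idem_sandwich_next]. Qed.

End Flag.

Section SplitDecTridiagonal.
Variables (K : fieldType) (d : nat).
Local Notation n := d.+1.
Variables (A As : 'M[K]_n) (eta etas : 'I_n -> K) (U : 'I_n -> {vspace 'cV[K]_n}).
Hypothesis splitU : split_dec A As eta etas U.

Lemma split_dec_lower : mult_free As etas -> lower_tridiagonal (prim_idem As etas) A.
Proof.
case: splitU => [[Udim [Udir Ufull]] [Araise [_ [Aslower Aslower0]]]] mfAs.
apply: (lower_tridiagonal_flag (s := eta) mfAs Udir Ufull).
- by move=> k u kpos; apply/actm_img_mem/Aslower.
- by move=> u /(actm_img_mem Aslower0); rewrite memv0 => /eqP.
- by move=> k u kd; apply/actm_img_mem/Araise.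
- by move=> k kd; apply: actm_img_neq0 (Udim _) (Udim _) (Araise k kd).
Qed.

(* Reading the decomposition backwards exchanges the roles of [A] and [As]. *)
Lemma split_dec_upper : mult_free A eta -> upper_tridiagonal (prim_idem A eta) As.
Proof.
case: splitU => [[Udim [Udir Ufull]] [Araise [Alast [Aslower _]]]] mfA.
rewrite -(lower_tridiagonal_rev _ (prim_idem_rev A eta)).
apply: (lower_tridiagonal_flag (U := fun k => U (rev_ord k)) (s := fun k => etas (rev_ord k))
  (mult_free_rev mfA) (directv_rev Udir)); rewrite ?sumv_rev //.
- move=> k u kpos uU; rewrite rev_inord_pred //.
  by apply: actm_img_mem uU; apply: Araise; rewrite /=; have := ltn_ord k; lia.
- by move=> u; rewrite rev_ord0 => /(actm_img_mem Alast); rewrite memv0 => /eqP.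
- move=> k u kd uU; rewrite rev_inord_succ //.
  by apply: actm_img_mem uU; apply: Aslower; rewrite /=; lia.
- move=> k kd; apply: actm_img_neq0 (Udim _) (Udim _) (Aslower _ _).
  by rewrite /=; lia.
Qed.

End SplitDecTridiagonal.

Lemma trmx_mulmx_eq0 (K : fieldType) n (u r : 'rV[K]_n) : u != 0 -> u^T *m r = 0 -> r = 0.
Proof.
move=> u0 ur; have [a ua] : exists a, u 0 a != 0.
  apply/existsP; apply: contraNT u0 => /existsPn u0.
  by apply/eqP/rowP => a; rewrite mxE; apply/eqP; have := u0 a; rewrite negbK.
apply/rowP => b; move/matrixP: ur => /(_ a b); rewrite !mxE big_ord1 !mxE.
by move/eqP; rewrite mulf_eq0 (negbTE ua) /= => /eqP->.
Qed.

Section Symmetry.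
Variables (K : fieldType) (d : nat).
Local Notation n := d.+1.
Variables (A Z : 'M[K]_n) (t : 'I_n -> K).
Hypothesis mfA : mult_free A t.
Hypotheses (lowZ : lower_tridiagonal (prim_idem A t) Z)
           (upZ : upper_tridiagonal (prim_idem A t) Z).
Local Notation E := (prim_idem A t).
Local Notation f := (eigenrow mfA).

Definition eigen_coef i j := (f i *m Z *m dual_eigencol mfA j) 0 0.

Lemma eigenrow_sandwich i j : f i *m Z *m E j = eigen_coef i j *: f j.
Proof.
by rewrite (prim_idem_factor mfA j) mulmxA [f i *m Z *m _]mx11_scalar mul_scalar_mx.
Qed.

Lemma eigenrow_mulmx i : f i *m Z = \sum_j eigen_coef i j *: f j.
Proof.
rewrite -[f i *m Z]mulmx1 -(sum_prim_idem mfA) mulmx_sumr.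
by apply: eq_bigr => j _; rewrite eigenrow_sandwich.
Qed.

Lemma eigen_coef_eq0 (i j : 'I_n) : (i.+1 < j)%N || (j.+1 < i)%N -> eigen_coef i j = 0.
Proof.
move=> ij; have := eigenrow_sandwich i j.
have -> : f i *m Z *m E j = f i *m (E i *m Z *m E j).
  by rewrite !mulmxA eigenrow_prim_idem eqxx scale1r.
have -> : E i *m Z *m E j = 0 by case/orP: ij => [/(upZ i j).1 | /(lowZ i j).1].
rewrite mulmx0 => /esym/eqP; rewrite scaler_eq0 (negbTE (eigenrow_neq0 _ _)) orbF.
by move/eqP.
Qed.

Lemma eigen_coef_neq0 (i j : 'I_n) : (i.+1 == j) || (j.+1 == i) -> eigen_coef i j != 0.
Proof.
move=> ij; have : E i *m Z *m E j != 0 by case/orP: ij => [/(upZ i j).2 | /(lowZ i j).2].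
apply: contraNneq => c0.
rewrite (prim_idem_factor mfA i) -!mulmxA (mulmxA (f i)) eigenrow_sandwich c0.
by rewrite scale0r mulmx0.
Qed.

Fixpoint weight (k : nat) : K :=
  if k is k'.+1 then
    weight k' * eigen_coef (inord k') (inord k'.+1) / eigen_coef (inord k'.+1) (inord k')
  else 1.

Lemma weight_neq0 k : (k < n)%N -> weight k != 0.
Proof.
elim: k => [|k IH] kn /=; first exact: oner_neq0.
have kn' : (k < n)%N by apply: ltnW.
by rewrite !mulf_neq0 ?invr_eq0 ?IH // eigen_coef_neq0 // !inordK // eqxx ?orbT.
Qed.

Lemma weight_sym (i j : 'I_n) : weight i * eigen_coef i j = weight j * eigen_coef j i.
Proof.
have [far|] := boolP ((i.+1 < j) || (j.+1 < i))%N.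
  by rewrite !eigen_coef_eq0 ?mulr0 // orbC.
rewrite negb_or -!leqNgt => /andP[ji ij].
wlog lt_ij : i j ji ij / (i < j)%N.
  move=> sym; case: (ltngtP i j) => [/sym|/sym|/val_inj->] //; first exact.
  by move=> H; apply/esym/H.
have ji' : (j : nat) = i.+1 by apply/eqP; rewrite eqn_leq ji lt_ij.
have ej : inord i.+1 = j by apply: val_inj; rewrite /= inordK // -ji'.
rewrite ji' /= inord_val ej divfK // eigen_coef_neq0 //.
by rewrite ji' eqxx orbT.
Qed.

Definition gram := \sum_(i < n) weight i *: ((f i)^T *m f i).

Lemma gram_A : A^T *m gram = gram *m A.
Proof.
rewrite /gram mulmx_sumr mulmx_suml; apply: eq_bigr => i _.
rewrite -scalemxAr -scalemxAl mulmxA -trmx_mul -mulmxA (eigenrowP mfA) linearZ /=.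
by rewrite -scalemxAl -scalemxAr.
Qed.

Lemma gram_Z : Z^T *m gram = gram *m Z.
Proof.
rewrite /gram mulmx_sumr mulmx_suml.
under eq_bigr => i _ do
  rewrite -scalemxAr mulmxA -trmx_mul eigenrow_mulmx linear_sum mulmx_suml scaler_sumr.
under [RHS]eq_bigr => i _ do rewrite -scalemxAl -mulmxA eigenrow_mulmx mulmx_sumr scaler_sumr.
rewrite exchange_big /=; apply: eq_bigr => i _; apply: eq_bigr => j _.
by rewrite linearZ /= -scalemxAl -scalemxAr !scalerA weight_sym.
Qed.

Lemma trmx_prim_idem_gram j : (E j)^T *m gram = weight j *: ((f j)^T *m f j).
Proof.
rewrite /gram mulmx_sumr (bigD1 j) //= big1 => [|i ij].
  by rewrite addr0 -scalemxAr mulmxA -trmx_mul eigenrow_prim_idem eqxx scale1r.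
rewrite -scalemxAr mulmxA -trmx_mul eigenrow_prim_idem eq_sym (negbTE ij).
by rewrite scale0r trmx0 mul0mx scaler0.
Qed.

Lemma gram_mulmx_eq0 (Y : 'M[K]_n) : gram *m Y = 0 -> Y = 0.
Proof.
move=> GY.
have fY j : f j *m Y = 0.
  apply: (trmx_mulmx_eq0 (eigenrow_neq0 mfA j)).
  have : (E j)^T *m gram *m Y = 0 by rewrite -mulmxA GY mulmx0.
  rewrite trmx_prim_idem_gram -scalemxAl => /eqP.
  by rewrite scaler_eq0 (negbTE (weight_neq0 (ltn_ord j))) mulmxA => /eqP.
rewrite -[Y]mul1mx -(sum_prim_idem mfA) mulmx_suml big1 // => j _.
by rewrite (prim_idem_factor mfA j) -mulmxA fY mulmx0.
Qed.

Lemma gram_horner p : (horner_mx Z p)^T *m gram = gram *m horner_mx Z p.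
Proof.
elim/poly_ind: p => [|p a IH]; first by rewrite rmorph0 trmx0 mul0mx mulmx0.
rewrite rmorphD rmorphM /= horner_mx_X horner_mx_C.
have ZpZ : comm_mx Z (horner_mx Z p) by apply: comm_mx_horner.
have -> : horner_mx Z p * Z = Z *m horner_mx Z p by rewrite ZpZ.
rewrite linearD /= trmx_mul mulmxDl mulmxDr -mulmxA gram_Z (mulmxA (horner_mx Z p)^T) IH.
rewrite -!mulmxA -ZpZ.
by rewrite tr_scalar_mx mul_scalar_mx mul_mx_scalar.
Qed.

Lemma prim_idem_sandwich_sym (s : 'I_n -> K) a b :
  let Es := prim_idem Z s in Es a *m A *m Es b = 0 -> Es b *m A *m Es a = 0.
Proof.
rewrite /= !prim_idem_horner => EAE0; apply: gram_mulmx_eq0.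
have : (horner_mx Z (lagrange_poly s a) *m A *m horner_mx Z (lagrange_poly s b))^T *m gram = 0.
  by rewrite EAE0 trmx0 mul0mx.
rewrite !trmx_mul -!mulmxA gram_horner (mulmxA A^T) gram_A -mulmxA (mulmxA _ gram).
by rewrite gram_horner !mulmxA.
Qed.

End Symmetry.

Section TriangularCoords.
Variables (K : fieldType) (d : nat).
Local Notation n := d.+1.
Variables (P : 'I_n -> 'M[K]_n) (b : 'I_n -> 'cV[K]_n) (a : 'I_n -> K).
Hypothesis Pb_neq0 : forall j, P j *m b j != 0.

Lemma coef_eq0_of_probe (j : 'I_n) :
  (forall k, k != j -> a k = 0 \/ P j *m b k = 0) ->
  P j *m (\sum_k a k *: b k) = 0 -> a j = 0.
Proof.
move=> others; rewrite mulmx_sumr (bigD1 j) //= big1 ?addr0 => [|k kj].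
  by rewrite -scalemxAr => /eqP; rewrite scaler_eq0 (negbTE (Pb_neq0 j)) orbF => /eqP.
by rewrite -scalemxAr; case: (others k kj) => ->; rewrite ?scale0r ?scaler0.
Qed.

Lemma lower_triangular_coef_eq0 m :
  (forall j k : 'I_n, (k < j)%N -> P j *m b k = 0) ->
  (forall j : 'I_n, (m <= j)%N -> P j *m (\sum_k a k *: b k) = 0) ->
  forall j : 'I_n, (m <= j)%N -> a j = 0.
Proof.
move=> Plow Pa0; suff a0 r (j : 'I_n) : (d - j <= r)%N -> (m <= j)%N -> a j = 0.
  by move=> j; apply: (a0 d); rewrite leq_subr.
elim: r j => [|r IH] j jr mj; apply: coef_eq0_of_probe (Pa0 j mj) => k kj;
  have [kj'|jk|/val_inj ke] := ltngtP k j; try by [right; apply: Plow | rewrite ke eqxx in kj].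
  by exfalso; have := ltn_ord k; lia.
by left; apply: IH; have := ltn_ord k; lia.
Qed.

Lemma upper_triangular_coef_eq0 m :
  (forall j k : 'I_n, (j < k)%N -> P j *m b k = 0) ->
  (forall j : 'I_n, (j < m)%N -> P j *m (\sum_k a k *: b k) = 0) ->
  forall j : 'I_n, (j < m)%N -> a j = 0.
Proof.
move=> Pup Pa0; suff a0 r (j : 'I_n) : (j <= r)%N -> (j < m)%N -> a j = 0.
  by move=> j; apply: a0.
elim: r j => [|r IH] j jr jm; apply: coef_eq0_of_probe (Pa0 j jm) => k kj;
  have [kj'|jk|/val_inj ke] := ltngtP k j; try by [right; apply: Pup | rewrite ke eqxx in kj].
  by exfalso; lia.
by left; apply: IH; lia.
Qed.

End TriangularCoords.

Section RaisedBasis.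
Variables (K : fieldType) (d : nat).
Local Notation n := d.+1.
Variables (A As : 'M[K]_n) (th ths : 'I_n -> K).
Hypotheses (mfA : mult_free A th) (mfAs : mult_free As ths).
Local Notation E := (prim_idem A th).
Local Notation Es := (prim_idem As ths).
Hypotheses (lowEs : lower_tridiagonal Es A) (upE : upper_tridiagonal E As).
Variable x : 'cV[K]_n.
Hypotheses (x_fixed : Es ord0 *m x = x) (x_neq0 : x != 0).

Let th_inj : injective th := proj1 mfA.

Fixpoint raise_vec (k : nat) : 'cV[K]_n :=
  if k is k'.+1 then (A - (th (inord k'))%:M) *m raise_vec k' else x.

Lemma prim_idem_raise_vec (i : 'I_n) k :
  E i *m raise_vec k = (\prod_(l < k) (th i - th (inord l))) *: (E i *m x).
Proof.
elim: k => [|k IH] /=; first by rewrite big_ord0 scale1r.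
by rewrite mulmxA prim_idem_shift // -scalemxAl IH scalerA big_ord_recr /= mulrC.
Qed.

Lemma prim_idem_raise_vec_eq0 (i : 'I_n) k : (i < k)%N -> E i *m raise_vec k = 0.
Proof.
by move=> ik; rewrite prim_idem_raise_vec (bigD1 (Ordinal ik)) //= inord_val subrr mul0r scale0r.
Qed.

Lemma dual_prim_idem_raise_vec_eq0 k (j : 'I_n) : (k < j)%N -> Es j *m raise_vec k = 0.
Proof.
elim: k j => [|k IH] j kj /=.
  by rewrite -x_fixed mulmxA prim_idem_mul // (negbTE (lt0n_neq0 kj : j != ord0)) scale0r mul0mx.
rewrite mulmxA mulmxBr mulmxBl mul_mx_scalar -scalemxAl IH ?(ltn_trans _ kj) // scaler0 subr0.
rewrite -(sum_prim_idem_mulmx mfAs (raise_vec k)) !mulmx_sumr big1 // => l _.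
have [lk|kl] := leqP l k; last by rewrite IH // mulmx0.
by rewrite !mulmxA (lowEs j l).1 ?mul0mx //; lia.
Qed.

Lemma dual_prim_idem_raise_vec_neq0 (k : 'I_n) : Es k *m raise_vec k != 0.
Proof.
suff Es_raise m : (m < n)%N -> Es (inord m) *m raise_vec m != 0.
  by have := Es_raise k (ltn_ord k); rewrite inord_val.
elim: m => [|m IH] mn /=.
  have -> : inord 0 = ord0 :> 'I_n by apply: val_inj; rewrite /= inordK.
  by rewrite x_fixed.
have mn' : (m < n)%N by apply: ltnW.
rewrite mulmxA mulmxBr mulmxBl mul_mx_scalar -scalemxAl.
rewrite dual_prim_idem_raise_vec_eq0 ?inordK // scaler0 subr0.
rewrite -(sum_prim_idem_mulmx mfAs (raise_vec m)) mulmx_sumr (bigD1 (inord m)) //=.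
rewrite big1 ?addr0 => [|l lm].
  apply: (mulmx_prim_idem_neq0 mfAs); last exact: IH.
  by apply: (lowEs _ _).2; rewrite !inordK.
have [lm'|ml|le] := ltngtP l m.
- by rewrite !mulmxA (lowEs _ _).1 ?mul0mx // inordK.
- by rewrite -mulmxA dual_prim_idem_raise_vec_eq0 // !mulmx0.
- by move: lm; rewrite -val_eqE /= inordK // le eqxx.
Qed.

Definition raise_basis := [tuple raise_vec i | i < n].

Lemma raise_basis_nth (i : 'I_n) : raise_basis`_i = raise_vec i.
Proof. by rewrite nth_mktuple. Qed.

(* Triangular with respect to the [Es j], with nonzero diagonal. *)
Lemma free_raise_basis : free raise_basis.
Proof.
apply/freeP => a a0 i.
apply: (lower_triangular_coef_eq0 dual_prim_idem_raise_vec_neq0 (m := 0)) => // [j k|j _].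
  exact: dual_prim_idem_raise_vec_eq0.
by under eq_bigr => k _ do rewrite -raise_basis_nth; rewrite a0 mulmx0.
Qed.

Lemma span_raise_basis : <<raise_basis>>%VS = fullv.
Proof.
apply/eqP; rewrite eqEdim subvf /= (eqP free_raise_basis).
by rewrite size_tuple dimvf /dim /= muln1.
Qed.

Lemma raise_basis_coord y : y = \sum_(i < n) coord raise_basis i y *: raise_vec i.
Proof.
have y_span : y \in <<raise_basis>>%VS by rewrite span_raise_basis memvf.
by rewrite {1}(coord_span y_span); apply: eq_bigr => i _; rewrite raise_basis_nth.
Qed.

Lemma prim_idem_x_neq0 (k : 'I_n) : E k *m x != 0.
Proof.
apply/negP => /eqP Ex0; case/negP: (prim_idem_neq0 mfA k); apply/eqP.
apply: mx_eq0_mulcV => y.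
rewrite [y]raise_basis_coord mulmx_sumr big1 // => i _.
by rewrite -scalemxAr prim_idem_raise_vec Ex0 !scaler0.
Qed.

Lemma prim_idem_raise_vec_neq0 (i : 'I_n) : E i *m raise_vec i != 0.
Proof.
rewrite prim_idem_raise_vec scaler_eq0 negb_or prim_idem_x_neq0 andbT.
apply/prodf_neq0 => l _; rewrite subr_eq0; apply/eqP => /th_inj /(congr1 val) /=.
by rewrite inordK ?(ltn_trans (ltn_ord l)) // => il; have := ltn_ord l; rewrite -il ltnn.
Qed.

Lemma raise_vec_neq0 (i : 'I_n) : raise_vec i != 0.
Proof. by apply: contraNneq (prim_idem_raise_vec_neq0 i) => ->; rewrite mulmx0. Qed.

Lemma raise_vec_n : raise_vec n = 0.
Proof.
rewrite -(sum_prim_idem_mulmx mfA (raise_vec n)) big1 // => k _.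
exact: prim_idem_raise_vec_eq0.
Qed.

Lemma dual_prim_idem_lowered_eq0 (i j : 'I_n) : (i <= j)%N ->
  Es j *m ((As - (ths i)%:M) *m raise_vec i) = 0.
Proof.
move=> ij; rewrite mulmxA prim_idem_shift // -scalemxAl.
have [->|ji] := eqVneq j i; first by rewrite subrr scale0r.
by rewrite dual_prim_idem_raise_vec_eq0 ?scaler0 // ltn_neqAle ij andbT eq_sym.
Qed.

Lemma prim_idem_lowered (i j : 'I_n) : (j < i)%N ->
  E j *m ((As - (ths i)%:M) *m raise_vec i) =
  \sum_(l < n | (i <= l)%N) E j *m As *m (E l *m raise_vec i).
Proof.
move=> ji; rewrite mulmxA mulmxBr mulmxBl mul_mx_scalar -scalemxAl.
rewrite prim_idem_raise_vec_eq0 // scaler0 subr0 -{1}(sum_prim_idem_mulmx mfA (raise_vec i)).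
rewrite mulmx_sumr [RHS]big_mkcond /=; apply: eq_bigr => l _.
by case: leqP => // li; rewrite prim_idem_raise_vec_eq0 // mulmx0.
Qed.

Lemma prim_idem_lowered_eq0 (i j : 'I_n) : (j.+1 < i)%N ->
  E j *m ((As - (ths i)%:M) *m raise_vec i) = 0.
Proof.
move=> ji; rewrite prim_idem_lowered ?(ltn_trans _ ji) // big1 // => l il.
by rewrite mulmxA (upE j l).1 ?mul0mx // (leq_trans ji).
Qed.

Lemma lowered_neq0 (i : 'I_n) : (0 < i)%N -> (As - (ths i)%:M) *m raise_vec i != 0.
Proof.
move=> i0; pose j : 'I_n := inord i.-1.
have ji : j.+1 == i by rewrite inordK ?prednK //; have := ltn_ord i; lia.
apply: contraNneq (mulmx_prim_idem_neq0 mfA ((upE j i).2 ji) (prim_idem_raise_vec_neq0 i)).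
move/(congr1 (mulmx (E j))); rewrite mulmx0 prim_idem_lowered ?(eqP ji) //.
rewrite (bigD1 i) //= big1 ?addr0 => [->|l /andP[il li]]; first by rewrite eqxx.
by rewrite mulmxA (upE j l).1 ?mul0mx // (eqP ji) ltn_neqAle eq_sym li.
Qed.

(* The [Es j] with [j >= i] and the [E j] with [j.+1 < i] kill the lowered vector; by
   triangularity they detect every coordinate except the one on [raise_vec i.-1]. *)
Lemma lowered_mem (i : 'I_n) : (0 < i)%N ->
  (As - (ths i)%:M) *m raise_vec i \in <[raise_vec i.-1]>%VS.
Proof.
move=> i0; set z := _ *m _; pose a k := coord raise_basis k z.
have z_sum : z = \sum_k a k *: raise_vec k := raise_basis_coord z.
have i1_lt : (i.-1 < n)%N by rewrite (leq_ltn_trans (leq_pred _)).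
have a_high : forall j : 'I_n, (i <= j)%N -> a j = 0.
  apply: (lower_triangular_coef_eq0 dual_prim_idem_raise_vec_neq0) => [j k kj|j ij].
    exact: dual_prim_idem_raise_vec_eq0.
  by rewrite -z_sum dual_prim_idem_lowered_eq0.
have a_low : forall j : 'I_n, (j < i.-1)%N -> a j = 0.
  apply: (upper_triangular_coef_eq0 prim_idem_raise_vec_neq0) => [j k jk|j ji].
    exact: prim_idem_raise_vec_eq0.
  by rewrite -z_sum prim_idem_lowered_eq0 //; lia.
rewrite z_sum (bigD1 (inord i.-1)) //= big1 ?addr0 => [|k ki].
  by rewrite inordK // rpredZ // memv_line.
move: ki; rewrite -val_eqE /= inordK // => ki.
have [ki'|ik] := ltnP k i.-1; first by rewrite a_low ?scale0r.
by rewrite a_high ?scale0r //; lia.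
Qed.

Definition raise_lines (i : 'I_n) : {vspace 'cV[K]_n} := <[raise_vec i]>%VS.

Lemma decomposition_raise_lines : decomposition raise_lines.
Proof.
split; first by move=> i; rewrite dim_vline raise_vec_neq0.
split; last first.
  rewrite -span_raise_basis span_def big_tuple.
  by apply: eq_bigr => i _; rewrite tnth_mktuple.
apply/directv_sum_independent => us usU us0 i _.
have us_line j : exists k, us j == k *: raise_vec j.
  by case/vlineP: (usU j isT) => k ->; exists k.
pose k j := xchoose (us_line j).
have usE j : us j = k j *: raise_vec j by apply/eqP; exact: xchooseP (us_line j).
have k0 : forall j, k j = 0.
  apply/(freeP free_raise_basis).
  by rewrite -[RHS]us0; apply: eq_bigr => j _; rewrite raise_basis_nth usE.
by rewrite usE k0 scale0r.
Qed.

Lemma split_dec_raise_lines : split_dec A As th ths raise_lines.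
Proof.
split; [exact: decomposition_raise_lines | split; [|split; [|split]]].
- by move=> i id; rewrite /raise_lines limg_line actmE inordK //= inord_val.
- rewrite /raise_lines limg_line actmE.
  have -> : (ord_max : 'I_n) = inord d by apply: val_inj; rewrite /= inordK.
  by rewrite inordK // -/(raise_vec d.+1) raise_vec_n vline0.
- move=> i i0; rewrite /raise_lines limg_line actmE inordK; last first.
    by rewrite (leq_ltn_trans (leq_pred _)).
  exact: vline_eq (lowered_neq0 i0) (lowered_mem i0).
- rewrite /raise_lines limg_line actmE /= -x_fixed mulmxA mulmxBl mulmx_prim_idem //.
  by rewrite mul_scalar_mx subrr mul0mx vline0.
Qed.

End RaisedBasis.

Lemma split_dec_exists (K : fieldType) d (A As : 'M[K]_d.+1) (th ths : 'I_d.+1 -> K) :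
  mult_free A th -> mult_free As ths ->
  lower_tridiagonal (prim_idem As ths) A -> upper_tridiagonal (prim_idem A th) As ->
  exists U, split_dec A As th ths U.
Proof.
move=> mfA mfAs lowEs upE; have [x x_fixed x_neq0] := prim_idem_fixed_exists mfAs ord0.
by exists (raise_lines A th x); apply: split_dec_raise_lines.
Qed.

Theorem theorem5p1 (K : fieldType) (d : nat) (A As : 'M[K]_d.+1)
  (th ths : 'I_d.+1 -> K) :
  mult_free A th -> mult_free As ths ->
  leonard_system A As (prim_idem A th) (prim_idem As ths) <->
  ((exists U, split_dec A As th ths U) /\
   (exists U, split_dec A As (fun i => th (rev_ord i)) ths U)).
Proof.
move=> mfA mfAs; rewrite leonard_systemE.
have upE_rev := upper_tridiagonal_rev As (prim_idem_rev A th).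
split=> [[lowEs _ lowE upE] | [[U splitU] [U' splitU']]].
  split; first exact: split_dec_exists.
  by apply: split_dec_exists (mult_free_rev mfA) mfAs lowEs _; rewrite upE_rev.
have lowEs := split_dec_lower splitU mfAs.
have upE := split_dec_upper splitU mfA.
have lowE : lower_tridiagonal (prim_idem A th) As.
  by rewrite -upE_rev; apply: split_dec_upper splitU' (mult_free_rev mfA).
split=> //; apply: upper_of_lower_tridiagonal lowEs => a b.
exact: prim_idem_sandwich_sym mfA lowE upE ths a b.
Qed.
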